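(* Assume the common support assumption, the overlap assumption and the unconfoundedness assumption. Then for all $x\in\mathcal X$, $\theta(x)=\Gamma(x,p)$, where $p=p_0$ under Design 1 and $p=0$ under Design 2.
   Context: Population variables: $Y^*\in\{0,1\}$ (outcome), $T^*\in\{0,1\}$ (treatment), $X^*$ (covariate vector). Potential outcomes $Y^*(1),Y^*(0)\in\{0,1\}$ satisfy $Y^*=T^*Y^*(1)+(1-T^* )Y^*(0)$. Let $p_0:=\Pr(Y^*=1)$. The observed vector $(Y,T,X)$ arises from Bernoulli sampling: $Y\in\{0,1\}$ is drawn with known probability $h_0:=\Pr(Y=1)\in(0,1)$, and given $Y=y$, $(T,X)$ is drawn from a distribution $\mathcal P_y$. Densities (or mass functions) are denoted by $f$. Design 1 (case-control): for all $t\in\{0,1\}$, $x\in\mathcal X$, $y\in\{0,1\}$, $f_{X|Y}(x\mid y)=f_{X^*|Y^*}(x\mid y)$ and $\Pr(T=t\mid X=x,Y=y)=\Pr(T^*=t\mid X^*=x,Y^*=y)$. Design 2 (case-population): for all $t,x$, $f_{X|Y}(x\mid 0)=f_{X^*}(x)$, $\Pr(T=t\mid X=x,Y=0)=\Pr(T^*=t\mid X^*=x)$, $f_{X|Y}(x\mid 1)=f_{X^*|Y^*}(x\mid 1)$, $\Pr(T=t\mid X=x,Y=1)=\Pr(T^*=t\mid X^*=x,Y^*=1)$. Common support assumption: the support of $X^*$ and that of $X$ given $Y=y$ for $y=0,1$ coincide; call it $\mathcal X$. Let $\Pi(t\mid y,x):=\Pr(T=t\mid Y=y,X=x)$, assumed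 nonzero for all $t,y\in\{0,1\}$. For $p\in[0,1]$, under Design 1, $r(x,p):=\frac{p(1-h_0)\Pr(Y=1\mid X=x)}{p(1-h_0)\Pr(Y=1\mid X=x)+h_0(1-p)\Pr(Y=0\mid X=x)}$, and under Design 2, $r(x,p):=\frac{p(1-h_0)}{h_0}\frac{\Pr(Y=1\mid X=x)}{\Pr(Y=0\mid X=x)}$. Define $\Gamma(x,p):=\frac{\Pi(1\mid 1,x)}{\Pi(0\mid 1,x)}\cdot\frac{\Pi(0\mid 0,x)+r(x,p)\{\Pi(0\mid 1,x)-\Pi(0\mid 0,x)\}}{\Pi(1\mid 0,x)+r(x,p)\{\Pi(1\mid 1,x)-\Pi(1\mid 0,x)\}}$. Causal relative risk: $\theta(x):=\Pr\{Y^*(1)=1\mid X^*=x\}/\Pr\{Y^*(0)=1\mid X^*=x\}$ (denominator assumed positive). Overlap: for all $(t,x)\in\{0,1\}\times\mathcal X$, $0<\Pr\{Y^*(t)=1\mid X^*=x\}<1$ and $0<\Pr(T^*=1\mid X^*=x)<1$. Unconfoundedness: for all $t\in\{0,1\}$, $x\in\mathcal X$, $\Pr\{Y^*(t)=1\mid T^*=1,X^*=x\}=\Pr\{Y^*(t)=1\mid T^*=0,X^*=x\}$. *)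

From HB Require Import structures.
From mathcomp Require Import all_boot all_order all_algebra.
From mathcomp Require Import all_classical all_reals all_analysis.
Set Implicit Arguments. Unset Strict Implicit. Unset Printing Implicit Defensive.
Import Order.TTheory GRing.Theory Num.Theory.
Local Open Scope ring_scope.
Local Open Scope classical_set_scope.

(* Population.  The covariate Xs lives in a measurable space X with a base  *)
(* measure mu.  The joint law of (Ys(1), Ys(0), Ts, Xs) is given by a        *)
(* density  g y1 y0 t x  w.r.t. (counting on {0,1}^3) x mu.  The observed     *)
(* outcome is Ys = Ts Ys(1) + (1 - Ts) Ys(0).  Booleans encode {0,1}.        *)

Section Defs.
Variables (R : realType) (d : measure_display) (X : measurableType d).
Implicit Types (g : bool -> bool -> bool -> X -> R) (x : X).

Definition Ystar (y1 y0 t : bool) : bool := if t then y1 else y0.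

Definition mass g (E : bool -> bool -> bool -> bool) x : R :=
  \sum_(y1 : bool) \sum_(y0 : bool) \sum_(t : bool)
     (if E y1 y0 t then g y1 y0 t x else 0).

Definition fXs g x : R := mass g (fun _ _ _ => true) x.

Definition condX g E x : R := mass g E x / fXs g x.

Definition condXF g E F x : R :=
  mass g (fun y1 y0 t => E y1 y0 t && F y1 y0 t) x / mass g F x.

Definition PrPO g (t : bool) x : R := condX g (fun y1 y0 _ => if t then y1 else y0) x.

Definition PrT1 g x : R := condX g (fun _ _ t => t) x.

Definition PrPO_T g (t s : bool) x : R :=
  condXF g (fun y1 y0 _ => if t then y1 else y0) (fun _ _ t' => t' == s) x.

Definition theta g x : R := PrPO g true x / PrPO g false x.

Definition PrYs (mu : {measure set X -> \bar R}) g (y : bool) : R :=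
  fine (\int[mu]_x (mass g (fun y1 y0 t => Ystar y1 y0 t == y) x)%:E).

Definition p0 (mu : {measure set X -> \bar R}) g : R := PrYs mu g true.

Definition fXs_given_Ys (mu : {measure set X -> \bar R}) g (y : bool) x : R :=
  mass g (fun y1 y0 t => Ystar y1 y0 t == y) x / PrYs mu g y.

Definition PrTs_given_XY g (t y : bool) x : R :=
  condXF g (fun _ _ t' => t' == t) (fun y1 y0 t' => Ystar y1 y0 t' == y) x.

Definition PrTs_given_X g (t : bool) x : R := condX g (fun _ _ t' => t' == t) x.

Definition supp (f : X -> R) : set X := [set x | 0 < f x].

(* Observed data.  Y ~ Bernoulli(h0); given Y = y, X has density             *)
(* fobs y = f_{X|Y}(. | y) w.r.t. mu and Pr(T = t | Y = y, X = x) = Pi t y x. *)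

(* Pr(Y = 1 | X = x) and Pr(Y = 0 | X = x), by Bayes' rule *)
Definition PrY_given_X (h0 : R) (fobs : bool -> X -> R) (y : bool) x : R :=
  (if y then h0 * fobs true x else (1 - h0) * fobs false x)
  / (h0 * fobs true x + (1 - h0) * fobs false x).

Inductive design := Design1 | Design2.

Definition rfun (D : design) h0 fobs x (p : R) : R :=
  match D with
  | Design1 =>
      p * (1 - h0) * PrY_given_X h0 fobs true x
      / (p * (1 - h0) * PrY_given_X h0 fobs true x
         + h0 * (1 - p) * PrY_given_X h0 fobs false x)
  | Design2 =>
      p * (1 - h0) / h0 * (PrY_given_X h0 fobs true x / PrY_given_X h0 fobs false x)
  end.

Definition Gamma (D : design) h0 fobs (Pi : bool -> bool -> X -> R) x (p : R) : R :=
  let r := rfun D h0 fobs x p in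
  Pi true true x / Pi false true x
  * ((Pi false false x + r * (Pi false true x - Pi false false x))
     / (Pi true false x + r * (Pi true true x - Pi true false x))).

Definition design_holds (D : design) (mu : {measure set X -> \bar R}) g
    (fobs : bool -> X -> R) (Pi : bool -> bool -> X -> R) (calX : set X) : Prop :=
  match D with
  | Design1 => forall x, calX x -> forall (y t : bool),
      fobs y x = fXs_given_Ys mu g y x /\ Pi t y x = PrTs_given_XY g t y x
  | Design2 => forall x, calX x -> forall t : bool,
      [/\ fobs false x = fXs g x, Pi t false x = PrTs_given_X g t x,
          fobs true x = fXs_given_Ys mu g true x
        & Pi t true x = PrTs_given_XY g t true x]
  end.

Definition p_of (D : design) (mu : {measure set X -> \bar R}) g : R :=
  match D with Design1 => p0 mu g | Design2 => 0 end.

End Defs.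

From HB Require Import structures.
From mathcomp Require Import all_boot all_order all_algebra.
From mathcomp Require Import all_classical all_reals all_analysis.
From mathcomp Require Import measurable_realfun.
From mathcomp Require Import ring lra.
Import Order.TTheory GRing.Theory Num.Theory.
Local Open Scope ring_scope.
Local Open Scope classical_set_scope.

(* Under unconfoundedness, Pr{Y*(t) = 1 | x} is the mediant of the two equal
   fractions Pr{Y*(t) = 1 | T* = s, x}, hence equals Pr(Y* = 1 | T* = t, x).
   So theta(x) is a ratio of observable probabilities, which Bayes' rule turns
   into
     Pr(T* = 1 | Y* = 1, x) / Pr(T* = 0 | Y* = 1, x) * Pr(T* = 0 | x) / Pr(T* = 1 | x).
   By total probability, Pr(T* = t | x) = Pi(t | 0, x) + r (Pi(t | 1, x) - Pi(t | 0, x))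
   with r = Pr(Y* = 1 | x), which is the shape of the second factor of Gamma.
   Under case-control sampling r(x, p0) undoes the reweighting of cases and
   controls and is exactly Pr(Y* = 1 | x); under case-population sampling the
   controls come from the population, so Pi(t | 0, x) = Pr(T* = t | x) and
   r(x, 0) = 0. *)

Lemma mediant_eq (F : numFieldType) (a b m n : F) :
  0 < m -> 0 < n -> a / m = b / n -> (a + b) / (m + n) = a / m.
Proof.
move=> m_gt0 n_gt0 ab_eq.
have -> : b = a / m * n by rewrite ab_eq mulfVK // lt0r_neq0.
by field; rewrite !lt0r_neq0 ?addr_gt0.
Qed.

Lemma fine_sum_eq1 (R : realType) (a b : \bar R) :
  (0 <= a)%E -> (0 <= b)%E -> (a + b = 1)%E -> fine b = 1 - fine a.
Proof.
by case: a => [a| |]; case: b => [b| |] //= _ _ [<-]; rewrite (addrC a) addrK.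
Qed.

Section Population.
Context {R : realType} {d : measure_display} {X : measurableType d}.
Variable g : bool -> bool -> bool -> X -> R.
Implicit Types (x : X) (E : bool -> bool -> bool -> bool).
Implicit Types (mu : {measure set X -> \bar R}).

Definition cell (y t : bool) x : R :=
  mass g (fun y1 y0 s => (Ystar y1 y0 s == y) && (s == t)) x.

Definition PrYs_given_X (y : bool) x : R :=
  condX g (fun y1 y0 t => Ystar y1 y0 t == y) x.

Lemma fXs_cells x :
  fXs g x = cell true true x + cell false true x
            + (cell true false x + cell false false x).
Proof. by rewrite /fXs /cell /mass !big_bool /=; ring. Qed.

Lemma mass_T_cells t x :
  mass g (fun _ _ s => s == t) x = cell true t x + cell false t x.
Proof. by rewrite /cell /mass !big_bool; case: t => /=; ring. Qed.

Lemma mass_Ys_cells y x :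
  mass g (fun y1 y0 s => Ystar y1 y0 s == y) x = cell y true x + cell y false x.
Proof. by rewrite /cell /mass !big_bool; case: y => /=; ring. Qed.

Lemma fXs_Ys_split x :
  fXs g x = mass g (fun y1 y0 s => Ystar y1 y0 s == true) x
            + mass g (fun y1 y0 s => Ystar y1 y0 s == false) x.
Proof. by rewrite fXs_cells !mass_Ys_cells; ring. Qed.

Lemma PrT1E x : PrT1 g x = PrTs_given_X g true x.
Proof.
rewrite /PrT1 /PrTs_given_X /condX; congr (mass _ _ _ / _).
by apply/funext => y1; apply/funext => y0; apply/funext; case.
Qed.

Lemma PrTs_given_X_cells t x :
  PrTs_given_X g t x = (cell true t x + cell false t x) / fXs g x.
Proof. by rewrite /PrTs_given_X /condX mass_T_cells. Qed.

Lemma PrTs_given_XY_cells t y x :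
  PrTs_given_XY g t y x = cell y t x / (cell y true x + cell y false x).
Proof.
rewrite /PrTs_given_XY /condXF -mass_Ys_cells /cell; congr (_ / _).
by rewrite /mass !big_bool; case: t; case: y => /=; ring.
Qed.

Lemma PrPO_T_diag t x :
  PrPO_T g t t x = cell true t x / (cell true t x + cell false t x).
Proof.
rewrite /PrPO_T /condXF mass_T_cells /cell; congr (_ / _).
by rewrite /mass !big_bool; case: t => /=; ring.
Qed.

Lemma mass_split_T E x :
  mass g E x = mass g (fun y1 y0 s => E y1 y0 s && (s == true)) x
             + mass g (fun y1 y0 s => E y1 y0 s && (s == false)) x.
Proof.
rewrite /mass -big_split; apply: eq_bigr => y1 _; rewrite -big_split.
apply: eq_bigr => y0 _; rewrite !big_bool /=.
by case: (E y1 y0 true); case: (E y1 y0 false); rewrite /= ?addr0 ?add0r.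
Qed.

Lemma PrPO_unconfounded t x :
  0 < cell true true x + cell false true x ->
  0 < cell true false x + cell false false x ->
  PrPO_T g t true x = PrPO_T g t false x -> PrPO g t x = PrPO_T g t t x.
Proof.
move=> T1_gt0 T0_gt0 unconf.
have -> : PrPO g t x = PrPO_T g t true x.
  rewrite /PrPO /condX /fXs (mass_split_T (fun y1 y0 _ => if t then y1 else y0)).
  rewrite (mass_split_T (fun _ _ _ => true)).
  by apply: mediant_eq => //=; rewrite mass_T_cells.
by case: t unconf.
Qed.

Lemma PrTs_given_XY_neq0 {t y x} : PrTs_given_XY g t y x != 0 ->
  cell y t x != 0 /\ cell y true x + cell y false x != 0.
Proof. by rewrite PrTs_given_XY_cells mulf_eq0 invr_eq0 negb_or => /andP. Qed.

Lemma theta_Bayes {x} :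
  0 < fXs g x -> 0 < PrTs_given_X g true x < 1 ->
  (forall t, PrPO_T g t true x = PrPO_T g t false x) ->
  PrTs_given_XY g false true x != 0 ->
  theta g x = PrTs_given_XY g true true x / PrTs_given_XY g false true x
              * (PrTs_given_X g false x / PrTs_given_X g true x).
Proof.
move=> N_gt0 PrT_01 unconf /PrTs_given_XY_neq0[c10_neq0 Y1_neq0].
move: PrT_01; rewrite PrTs_given_X_cells ltr_pdivlMr // ltr_pdivrMr // mul0r mul1r.
rewrite fXs_cells => /andP[T1_gt0 T1_lt].
have T0_gt0 : 0 < cell true false x + cell false false x by lra.
rewrite /theta !PrPO_unconfounded // !PrPO_T_diag.
rewrite !PrTs_given_XY_cells !PrTs_given_X_cells fXs_cells.
by field; rewrite -fXs_cells c10_neq0 Y1_neq0 !lt0r_neq0.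
Qed.

Lemma PrTs_given_X_mixture t x :
  0 < fXs g x -> (forall y, cell y true x + cell y false x != 0) ->
  PrTs_given_X g t x = PrTs_given_XY g t false x
    + PrYs_given_X true x * (PrTs_given_XY g t true x - PrTs_given_XY g t false x).
Proof.
move=> N_gt0 Y_neq0; move: N_gt0 (Y_neq0 true) (Y_neq0 false).
rewrite /PrYs_given_X /condX mass_Ys_cells !PrTs_given_XY_cells.
rewrite PrTs_given_X_cells fXs_cells.
by move=> N_gt0 Y1_neq0 Y0_neq0; field; rewrite Y1_neq0 Y0_neq0 lt0r_neq0.
Qed.

Lemma rfun_design1 mu h0 fobs x :
  0 < h0 < 1 -> 0 < fXs g x -> (forall y, 0 < fobs y x) ->
  (forall y, fobs y x = fXs_given_Ys mu g y x) ->
  PrYs mu g false = 1 - PrYs mu g true ->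
  rfun Design1 h0 fobs x (p0 mu g) = PrYs_given_X true x.
Proof.
move=> /andP[h0_gt0 h0_lt1] N_gt0 fobs_gt0 fobsE P0E.
have S_gt0 : 0 < h0 * fobs true x + (1 - h0) * fobs false x.
  by apply: addr_gt0; apply: mulr_gt0; rewrite ?subr_gt0.
have k_neq0 : h0 * (1 - h0) / (h0 * fobs true x + (1 - h0) * fobs false x) != 0.
  by rewrite !mulf_neq0 ?invr_eq0 ?lt0r_neq0 ?subr_gt0.
move: (fobs_gt0 true) (fobs_gt0 false) S_gt0 k_neq0.
rewrite /rfun /PrY_given_X /p0 /PrYs_given_X /condX !fobsE /fXs_given_Ys P0E.
rewrite fXs_Ys_split in N_gt0 *.
set P := PrYs mu g true.
set m1 := mass g (fun y1 y0 t => Ystar y1 y0 t == true) x in N_gt0 *.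
set m0 := mass g (fun y1 y0 t => Ystar y1 y0 t == false) x in N_gt0 *.
set S := h0 * (m1 / P) + _; set k := h0 * (1 - h0) / S.
move=> f1_gt0 f0_gt0 S_gt0 k_neq0.
have P_neq0 : P != 0 by apply: contraTneq f1_gt0 => ->; rewrite invr0 mulr0 ltxx.
have P'_neq0 : 1 - P != 0 by apply: contraTneq f0_gt0 => ->; rewrite invr0 mulr0 ltxx.
(* Both terms of r(x, p0) are k times the mass of {Y* = y}: the factors p0 and
   1 - p0 cancel the normalisations of f(x | y). *)
have -> : P * (1 - h0) * (h0 * (m1 / P) / S) = k * m1.
  by rewrite /k; field; rewrite P_neq0 lt0r_neq0.
have -> : h0 * (1 - P) * ((1 - h0) * (m0 / (1 - P)) / S) = k * m0.
  by rewrite /k; field; rewrite P'_neq0 lt0r_neq0.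
by rewrite -mulrDr invfM mulrACA mulfV ?mul1r.
Qed.

Hypothesis g_ge0 : forall y1 y0 t x, 0 <= g y1 y0 t x.
Hypothesis g_meas : forall y1 y0 t, measurable_fun setT (g y1 y0 t).

Lemma mass_ge0 E x : 0 <= mass g E x.
Proof. by rewrite /mass; do 3 apply: sumr_ge0 => ? _; case: ifP. Qed.

Lemma measurable_mass E : measurable_fun setT (mass g E).
Proof.
rewrite /mass; apply: measurable_sum => y1; apply: measurable_sum => y0.
apply: measurable_sum => t.
by case: (E y1 y0 t); [exact: g_meas | exact: measurable_cst].
Qed.

Lemma PrYs_false mu :
  (\int[mu]_x (fXs g x)%:E)%E = 1%E -> PrYs mu g false = 1 - PrYs mu g true.
Proof.
have mass_ge0E E x : (0 <= (mass g E x)%:E)%E by rewrite lee_fin mass_ge0.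
move=> int_fXs; apply: fine_sum_eq1; rewrite ?integral_ge0 //.
rewrite -ge0_integralD //.
  by rewrite -int_fXs; apply: eq_integral => x _; rewrite fXs_Ys_split EFinD.
all: by apply/measurable_EFinP; exact: measurable_mass.
Qed.

End Population.

Theorem theorem1 (R : realType) (d : measure_display) (X : measurableType d)
  (mu : {measure set X -> \bar R})
  (* population joint density of (Ys(1), Ys(0), Ts, Xs) *)
  (g : bool -> bool -> bool -> X -> R)
  (* observed design: h0 = Pr(Y = 1), fobs y = f_{X|Y}(.|y), Pi t y x = Pi(t|y,x) *)
  (h0 : R) (fobs : bool -> X -> R) (Pi : bool -> bool -> X -> R)
  (D : design) :
  (* g is a probability density *)
  (forall y1 y0 t x, 0 <= g y1 y0 t x) ->
  (forall y1 y0 t, measurable_fun setT (g y1 y0 t)) ->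
  ((\int[mu]_x (fXs g x)%:E)%E = 1%E) ->
  (* observed sampling *)
  0 < h0 < 1 ->
  (forall y x, 0 <= fobs y x) ->
  (forall y, measurable_fun setT (fobs y)) ->
  (forall y, (\int[mu]_x (fobs y x)%:E)%E = 1%E) ->
  (forall t y x, 0 <= Pi t y x) ->
  (forall y x, Pi true y x + Pi false y x = 1) ->
  (* common support: supports of Xs, X|Y=0, X|Y=1 coincide (= calX) *)
  supp (fobs false) = supp (fXs g) ->
  supp (fobs true) = supp (fXs g) ->
  (* Pi(t|y,x) nonzero *)
  (forall t y x, supp (fXs g) x -> Pi t y x != 0) ->
  (* overlap *)
  (forall t x, supp (fXs g) x -> 0 < PrPO g t x < 1) ->
  (forall x, supp (fXs g) x -> 0 < PrT1 g x < 1) ->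
  (* unconfoundedness *)
  (forall t x, supp (fXs g) x -> PrPO_T g t true x = PrPO_T g t false x) ->
  (* the sampling design *)
  design_holds D mu g fobs Pi (supp (fXs g)) ->
  forall x, supp (fXs g) x ->
    theta g x = Gamma D h0 fobs Pi x (p_of D mu g).
Proof.
move=> g_ge0 g_meas int_fXs h0_01 _ _ _ _ _ supp0 supp1 Pi_neq0 _ PrT1_01 unconf
  design x Xx.
have PrT_01 : 0 < PrTs_given_X g true x < 1 by rewrite -PrT1E PrT1_01.
have theta_E := theta_Bayes g Xx PrT_01 (fun t => unconf t x Xx).
case: D design => /= design.
- have fobsE y : fobs y x = fXs_given_Ys mu g y x by have [] := design x Xx y true.
  have PiE t y : Pi t y x = PrTs_given_XY g t y x by have [] := design x Xx y t.
  have fobs_gt0 y : 0 < fobs y x.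
    by case: y; [rewrite -supp1 in Xx | rewrite -supp0 in Xx].
  have XY_neq0 t y : PrTs_given_XY g t y x != 0 by rewrite -PiE Pi_neq0.
  have Y_neq0 y : cell g y true x + cell g y false x != 0.
    by case: (PrTs_given_XY_neq0 g (XY_neq0 false y)).
  rewrite (theta_E (XY_neq0 false true)) /Gamma rfun_design1 ?PrYs_false //.
  by rewrite !PiE -!PrTs_given_X_mixture.
- have Pi0E t : Pi t false x = PrTs_given_X g t x by have [] := design x Xx t.
  have Pi1E t : Pi t true x = PrTs_given_XY g t true x by have [] := design x Xx t.
  rewrite theta_E; last by rewrite -Pi1E Pi_neq0.
  by rewrite /Gamma /rfun !mul0r !addr0 !Pi0E !Pi1E.
Qed.
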